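(* Let $p>d+1$. For every function $u:\mathbb Z^d\to\mathbb R$ and every $a\in\Omega$, $$\sum_{b\in\mathbb B^d}|\nabla u(b)|^2\,\mathrm{dist}_a^{-p}(x_b,y_b)\le C(p,d)\sum_{b\in\mathbb B^d}a(b)|\nabla u(b)|^2,$$ with $C(p,d):=\sum_{x\in\mathbb Z^d}(|x|+1)^{1-p}$, whenever the sums converge (with the convention $1/\infty=0$).
   Context: $\mathbb B^d$ is the set of nearest-neighbour bonds $\{x,x+e_i\}$ of $\mathbb Z^d$; $x_b,y_b$ endpoints of $b$ with $y_b-x_b\in\{e_1,\dots,e_d\}$; $\nabla u(b)=u(y_b)-u(x_b)$. $\Omega=[0,1]^{\mathbb B^d}$. Chemical distance $\mathrm{dist}_a(x,y)=\inf\{\sum_{b\in\pi}a(b)^{-1}:\pi$ a nearest-neighbour path from $x$ to $y\}$, with $1/0=+\infty$. *)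

From HB Require Import structures.
From mathcomp Require Import all_boot all_order all_algebra.
From mathcomp Require Import all_classical all_reals all_analysis.
Set Implicit Arguments. Unset Strict Implicit. Unset Printing Implicit Defensive.
Import Order.TTheory GRing.Theory Num.Theory.
Local Open Scope ring_scope.
Local Open Scope classical_set_scope.

Definition zpt (d : nat) := 'rV[int]_d.

Definition evec (d : nat) (i : 'I_d) : zpt d := \row_j ((i == j)%:R : int).

(* A bond b = {x, x + e_i} of B^d is encoded uniquely by the pair (x, i). *)
Definition bond (d : nat) := (zpt d * 'I_d)%type.
Definition xb (d : nat) (b : bond d) : zpt d := b.1.
Definition yb (d : nat) (b : bond d) : zpt d := b.1 + evec b.2.

Definition grad (R : realType) (d : nat) (u : zpt d -> R) (b : bond d) : R :=
  u (yb b) - u (xb b).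

Definition in_Omega (R : realType) (d : nat) (a : bond d -> R) : Prop :=
  forall b, 0 <= a b <= 1.

Definition inv_cond (R : realType) (d : nat) (a : bond d -> R) (b : bond d) : \bar R :=
  if a b == 0 then +oo%E else ((a b)^-1)%:E.

(* A nearest-neighbour path is a sequence of bonds each traversed in a given
   direction (true: x_b -> y_b, false: y_b -> x_b). *)
Definition osrc (d : nat) (s : bond d * bool) : zpt d :=
  if s.2 then xb s.1 else yb s.1.
Definition otgt (d : nat) (s : bond d * bool) : zpt d :=
  if s.2 then yb s.1 else xb s.1.

Fixpoint nn_path (d : nat) (x : zpt d) (p : seq (bond d * bool)) (y : zpt d) : Prop :=
  match p with
  | [::] => x = y
  | s :: p' => osrc s = x /\ nn_path (otgt s) p' y
  end.

Definition path_cost (R : realType) (d : nat) (a : bond d -> R)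
  (p : seq (bond d * bool)) : \bar R :=
  (\sum_(s <- p) inv_cond a s.1)%E.

Definition chem_dist (R : realType) (d : nat) (a : bond d -> R) (x y : zpt d) : \bar R :=
  ereal_inf [set path_cost a p | p in [set p | nn_path x p y]].

Definition chem_dist_pow (R : realType) (d : nat) (a : bond d -> R) (p : R)
  (x y : zpt d) : R :=
  match chem_dist a x y with
  | r%:E => r `^ (- p)
  | _ => 0
  end.

Definition enorm (R : realType) (d : nat) (x : zpt d) : R :=
  Num.sqrt (\sum_(i < d) ((x ord0 i)%:~R : R) ^+ 2).

Definition Cpd (R : realType) (d : nat) (p : R) : \bar R :=
  \esum_(x in [set: zpt d]) ((enorm R x + 1) `^ (1 - p))%:E.

From HB Require Import structures.
From mathcomp Require Import all_boot all_order all_algebra.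
From mathcomp Require Import all_classical all_reals all_analysis.
From mathcomp Require Import ring lra zify.
Import Order.TTheory GRing.Theory Num.Theory.
Set Implicit Arguments. Unset Strict Implicit. Unset Printing Implicit Defensive.
Local Open Scope ring_scope.
Local Open Scope classical_set_scope.

(* Fix a bond b with finite chemical distance r and some eta > 1.  A path from
   x_b to y_b of cost W < eta r, with its loops erased, gives by Cauchy-Schwarz
   |grad u(b)|^2 <= W * sum_{e in path} a(e) |grad u(e)|^2, and every bond e of
   the path satisfies |x_b + y_b - x_e - y_e| + 1 <= length <= W < eta r.  Hence
     |grad u(b)|^2 r^-p <= eta^p sum_e (|x_b + y_b - x_e - y_e| + 1)^(1-p) a(e) |grad u(e)|^2.
   Summing over b and exchanging the sums, each e collects at most C(p,d) since
   b |-> x_b + y_b is injective; finally eta -> 1. *)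

Lemma sum_sqr_le_sqr_sum_norm (R : realDomainType) (I : Type) (r : seq I) (f : I -> R) :
  \sum_(i <- r) f i ^+ 2 <= (\sum_(i <- r) `|f i|) ^+ 2.
Proof.
elim: r => [|i r IH]; first by rewrite !big_nil expr2 mulr0.
have S0 : 0 <= \sum_(j <- r) `|f j| by exact: sumr_ge0.
have fi0 := normr_ge0 (f i).
rewrite !big_cons -[f i ^+ 2]real_normK ?num_real //; nra.
Qed.

Lemma weighted_cauchy_schwarz (R : realFieldType) (I : eqType) (r : seq I) (w x : I -> R) :
  {in r, forall i, 0 < w i} ->
  (\sum_(i <- r) x i) ^+ 2 <= (\sum_(i <- r) w i) * \sum_(i <- r) x i ^+ 2 / w i.
Proof.
case: r => [|i0 r]; first by rewrite !big_nil mul0r expr2 mulr0.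
move=> w_gt0; set W := \sum_(i <- _) w i; set X := \sum_(i <- _) x i.
have W_gt0 : 0 < W.
  have rest_ge0 : 0 <= \sum_(i <- r) w i.
    by rewrite big_seq; apply: sumr_ge0 => i ir; apply/ltW/w_gt0; rewrite in_cons ir orbT.
  by rewrite /W big_cons; have := w_gt0 i0 (mem_head _ _); lra.
(* Expanding this sum of squares gives Q - X^2 / W, with Q the right-hand sum. *)
have : 0 <= \sum_(i <- i0 :: r) w i * (x i / w i - X / W) ^+ 2.
  by rewrite big_seq; apply: sumr_ge0 => i /w_gt0/ltW wi; rewrite mulr_ge0 ?sqr_ge0.
rewrite (eq_big_seq (fun i => x i ^+ 2 / w i - (2 * X / W) * x i + (X / W) ^+ 2 * w i));
  last first.
  by move=> i /w_gt0 wi; field; rewrite ?gt_eqF ?W_gt0.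
rewrite big_split sumrB /= -!mulr_sumr -/W -/X.
have -> : 2 * X / W * X = X ^+ 2 / W + (X / W) ^+ 2 * W by field; rewrite gt_eqF.
by rewrite opprD addrA subrK subr_ge0 ler_pdivrMr // mulrC.
Qed.

Section L1Norm.
Variables (R : realType) (d : nat).

Definition l1norm (x : zpt d) : R := \sum_(i < d) `|(x ord0 i)%:~R|.

Lemma l1norm_ge0 x : 0 <= l1norm x.
Proof. exact: sumr_ge0. Qed.

Lemma l1norm0 : l1norm 0 = 0.
Proof. by rewrite /l1norm big1 // => i _; rewrite mxE normr0. Qed.

Lemma l1normD x y : l1norm (x + y) <= l1norm x + l1norm y.
Proof.
by rewrite /l1norm -big_split; apply: ler_sum => i _; rewrite mxE intrD ler_normD.
Qed.

Lemma l1normN x : l1norm (- x) = l1norm x.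
Proof. by apply: eq_bigr => i _; rewrite mxE intrN normrN. Qed.

Lemma l1norm_evec i : l1norm (evec i) = 1.
Proof.
rewrite /l1norm (bigD1 i) //= big1 ?addr0 => [|j /negPf ji].
  by rewrite mxE eqxx normr1.
by rewrite mxE eq_sym ji normr0.
Qed.

Lemma enorm_le_l1norm x : enorm R x <= l1norm x.
Proof.
rewrite /enorm -(ger0_norm (l1norm_ge0 x)) -sqrtr_sqr ler_sqrt ?sqr_ge0 //.
exact: sum_sqr_le_sqr_sum_norm.
Qed.

End L1Norm.

Section NearestNeighbourPaths.
Variables (R : realType) (d : nat).
Implicit Types (x y : zpt d) (s : bond d * bool) (q : seq (bond d * bool)).

Lemma osrc_add_otgt s : osrc s + otgt s = xb s.1 + yb s.1.
Proof. by rewrite /osrc /otgt; case: s.2; rewrite // addrC. Qed.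

Lemma l1norm_otgtB_osrc s : l1norm R (otgt s - osrc s) = 1.
Proof.
rewrite /osrc /otgt /yb /xb; case: s.2.
  by rewrite addrAC subrr add0r l1norm_evec.
by rewrite opprD addrA subrr add0r l1normN l1norm_evec.
Qed.

Lemma nn_path_cat x q1 q2 y :
  nn_path x (q1 ++ q2) y <-> exists m, nn_path x q1 m /\ nn_path m q2 y.
Proof.
elim: q1 x => [|s q1 IH] x /=.
  by split => [h|[m [-> h]]]; first by exists x.
split => [[xs /IH [m [h1 h2]]]|[m [[xs h1] h2]]]; first by exists m.
by split => //; apply/IH; exists m.
Qed.

Lemma l1norm_nn_path_le x q y : nn_path x q y -> l1norm R (y - x) <= (size q)%:R.
Proof.
elim: q x => [|s q IH] x /= => [->|[<- sq]]; first by rewrite subrr l1norm0.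
rewrite -(addrNK (otgt s) y) -addrA mulrSr.
apply: le_trans (l1normD R _ _) _; rewrite l1norm_otgtB_osrc lerD2r.
exact: IH.
Qed.

Lemma l1norm_nn_path_bond_le x q y s : nn_path x q y -> s \in q ->
  l1norm R (x + y - (xb s.1 + yb s.1)) + 1 <= (size q)%:R.
Proof.
elim: q x => [|s0 q IH] x //= [<- hq]; rewrite in_cons mulrSr => /predU1P[->|sq].
  rewrite -osrc_add_otgt [osrc s0 + y]addrC opprD addrA addrK lerD2r.
  exact: l1norm_nn_path_le hq.
have -> : osrc s0 + y - (xb s.1 + yb s.1) =
          (osrc s0 - otgt s0) + (otgt s0 + y - (xb s.1 + yb s.1)).
  by rewrite !addrA addrNK.
apply: le_trans (lerD (l1normD R _ _) (lexx 1)) _.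
by rewrite -opprB l1normN l1norm_otgtB_osrc -addrA [1 + _]addrC lerD2r IH.
Qed.

Lemma normB_le_nn_path (u : zpt d -> R) x q y :
  nn_path x q y -> `|u y - u x| <= \sum_(s <- q) `|grad u s.1|.
Proof.
elim: q x => [|s q IH] x /= => [->|[<- hq]]; first by rewrite subrr normr0 big_nil.
rewrite big_cons -(subrKA (u (otgt s))) addrC.
apply: le_trans (ler_normD _ _) _; rewrite lerD ?IH //.
by rewrite /osrc /otgt /grad; case: s.2; rewrite // distrC.
Qed.

End NearestNeighbourPaths.

Lemma nonuniq_map_split (T U : eqType) (f : T -> U) (s : seq T) : ~~ uniq (map f s) ->
  exists s1 s2 s3 t1 t2, s = s1 ++ t1 :: s2 ++ t2 :: s3 /\ f t1 = f t2.
Proof.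
elim: s => [|t s IH] //=; rewrite negb_and negbK => /orP[/mapP [t2 t2s ft]|/IH].
  by case/splitPr: t2s => s2 s3; exists [::], s2, s3, t, t2.
by move=> [s1 [s2 [s3 [t1 [t2 [-> ft]]]]]]; exists (t :: s1), s2, s3, t1, t2.
Qed.

Section LoopErasure.
Variable d : nat.
Implicit Types (x y : zpt d) (s : bond d * bool) (q : seq (bond d * bool)).

(* A bond used twice closes a loop: if both traversals go the same way, skip
   from the first to the second; otherwise both traversals can be dropped. *)
Lemma nn_path_shortcut x q1 s1 q2 s2 q3 y : s1.1 = s2.1 ->
  nn_path x (q1 ++ s1 :: q2 ++ s2 :: q3) y ->
  nn_path x (q1 ++ s2 :: q3) y \/ nn_path x (q1 ++ q3) y.
Proof.
move=> e12 /nn_path_cat [m [h1 /= [src1 /nn_path_cat [_ [_ /= [_ h3]]]]]].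
have [same|opp] := eqVneq s1.2 s2.2.
  left; apply/nn_path_cat; exists m; split => //=; split => //.
  by rewrite -src1 /osrc same e12.
right; apply/nn_path_cat; exists m; split => //; rewrite -src1.
by move: opp h3; rewrite /osrc /otgt e12; case: s1.2; case: s2.2.
Qed.

Lemma exists_uniq_nn_path x q y : nn_path x q y ->
  exists2 q', nn_path x q' y & subseq q' q && uniq (map fst q').
Proof.
have [n] := ubnP (size q); elim: n q => // n IH q /ltnSE size_q hq.
have [uq|nuq] := boolP (uniq (map fst q)); first by exists q; rewrite ?subseq_refl.
have [q1 [q2 [q3 [s1 [s2 [qE e12]]]]]] := nonuniq_map_split nuq; subst q.
have sub2 : subseq (q1 ++ s2 :: q3) (q1 ++ s1 :: q2 ++ s2 :: q3).
  by apply: cat_subseq (subseq_refl q1) (suffix_subseq (s1 :: q2) _).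
have sub1 : subseq (q1 ++ q3) (q1 ++ s1 :: q2 ++ s2 :: q3).
  apply: cat_subseq (subseq_refl q1) _.
  exact: subseq_trans (subseq_cons q3 s2) (suffix_subseq (s1 :: q2) _).
have shorter q' : (size q' < size (q1 ++ s1 :: q2 ++ s2 :: q3))%N -> (size q' < n)%N.
  by move=> lt; apply: leq_trans size_q.
have [h|h] := nn_path_shortcut e12 hq.
  have [|q' hq' /andP[sub uq']] := IH _ _ h.
    apply: shorter; rewrite !size_cat ltn_add2l /= ltnS size_cat; exact: leq_addl.
  by exists q'; rewrite ?uq' ?(subseq_trans sub).
have [|q' hq' /andP[sub uq']] := IH _ _ h.
  apply: shorter; rewrite !size_cat ltn_add2l /= ltnS size_cat.
  exact: leq_trans (leqnSn _) (leq_addl _ _).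
by exists q'; rewrite ?uq' ?(subseq_trans sub).
Qed.

End LoopErasure.

Section PathCost.
Variables (R : realType) (d : nat) (a : bond d -> R).
Hypothesis a_Omega : in_Omega a.
Implicit Types (x y : zpt d) (q : seq (bond d * bool)).

Lemma inv_cond_ge1 b : (1 <= inv_cond a b)%E.
Proof.
rewrite /inv_cond; case: eqP => [_|/eqP ab_neq0]; first exact: leey.
have /andP[ab_ge0 ab_le1] := a_Omega b.
by rewrite lee_fin invf_ge1 // lt_def ab_neq0.
Qed.

Lemma path_cost_cons s q : path_cost a (s :: q) = (inv_cond a s.1 + path_cost a q)%E.
Proof. by rewrite /path_cost big_cons. Qed.

Lemma path_cost_ge0 q : (0 <= path_cost a q)%E.
Proof. by apply: sume_ge0 => s _; exact: le_trans (inv_cond_ge1 _). Qed.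

Lemma path_cost_ge_size q : (((size q)%:R : R)%:E <= path_cost a q)%E.
Proof.
elim: q => [|s q IH]; first by rewrite /path_cost big_nil.
by rewrite path_cost_cons /= mulrS EFinD leeD ?inv_cond_ge1.
Qed.

Lemma path_cost_subseq q q' : subseq q q' -> (path_cost a q <= path_cost a q')%E.
Proof.
elim: q' q => [|s' q' IH] [|s q] //= sub.
- by rewrite /path_cost big_nil path_cost_ge0.
- case: eqVneq sub => [<-|_] sub; first by rewrite !path_cost_cons leeD ?IH.
  apply: le_trans (IH _ sub) _; rewrite path_cost_cons leeDr //.
  exact: le_trans (inv_cond_ge1 _).
Qed.

Lemma path_cost_lt_pinfty q : (path_cost a q < +oo)%E ->
  {in q, forall s, 0 < a s.1} /\ path_cost a q = (\sum_(s <- q) (a s.1)^-1)%:E.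
Proof.
rewrite -ge0_fin_numE ?path_cost_ge0 // => /sum_fin_numP fin.
have a_neq0 s : s \in q -> a s.1 != 0.
  by move=> /fin /(_ isT); rewrite /inv_cond; case: eqP.
split => [s /a_neq0 as_neq0|].
  by have /andP[as_ge0 _] := a_Omega s.1; rewrite lt_def as_neq0.
rewrite /path_cost -sumEFin; apply: eq_big_seq => s /a_neq0.
by rewrite /inv_cond => /negPf ->.
Qed.

Lemma chem_dist_ge1 x y : x != y -> (1 <= chem_dist a x y)%E.
Proof.
move=> xy; apply: le_ereal_inf_tmp => _ [[|s q] /= hq <-].
  by rewrite hq eqxx in xy.
by apply: le_trans (path_cost_ge_size _); rewrite lee_fin ler1n.
Qed.

Lemma exists_uniq_nn_path_cost_lt x y r c : chem_dist a x y = r%:E -> r < c ->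
  exists q, [/\ nn_path x q y, uniq (map fst q) & (path_cost a q < c%:E)%E].
Proof.
move=> dist_r r_lt_c; have : (chem_dist a x y < c%:E)%E by rewrite dist_r lte_fin.
move=> /ereal_inf_lt [_ [q0 hq0 <-] cost_lt].
have [q hq /andP[sub uq]] := exists_uniq_nn_path hq0.
by exists q; split => //; apply: le_lt_trans (path_cost_subseq sub) cost_lt.
Qed.

End PathCost.

Lemma le0_ger_powR (R : realType) (x y r : R) : r <= 0 -> 0 < x -> x <= y ->
  y `^ r <= x `^ r.
Proof.
move=> r_le0 x_gt0 xy; have y_gt0 := lt_le_trans x_gt0 xy.
have powRE z : z `^ r = (z `^ (- r))^-1 by rewrite -powRN opprK.
rewrite !powRE lef_pV2 ?posrE ?powR_gt0 //.
by apply: (ge0_ler_powR _ _ _ xy); rewrite ?oppr_ge0 ?nnegrE // ltW.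
Qed.

Lemma mul_powR1B_le (R : realType) (p eta r m : R) : 1 <= p -> 0 < r -> 0 < m ->
  m <= eta * r -> eta * r `^ (1 - p) <= eta `^ p * m `^ (1 - p).
Proof.
move=> p_ge1 r_gt0 m_gt0 m_le.
have eta_gt0 : 0 < eta by rewrite -(pmulr_lgt0 _ r_gt0) (lt_le_trans m_gt0).
have pow_le : eta `^ (1 - p) * r `^ (1 - p) <= m `^ (1 - p).
  rewrite -powRM ?(ltW eta_gt0) ?(ltW r_gt0) //.
  by apply: le0_ger_powR; rewrite ?subr_le0.
have {1}-> : eta = eta `^ p * eta `^ (1 - p).
  by rewrite -powRD ?(gt_eqF eta_gt0) ?implybT // addrC subrK powRr1 ?ltW.
by rewrite -mulrA ler_pM2l ?powR_gt0.
Qed.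

Lemma xb_neq_yb (d : nat) (b : bond d) : xb b != yb b.
Proof.
apply/eqP => xy; have /matrixP/(_ ord0 b.2)/eqP : evec b.2 = 0.
  by rewrite -[evec _](addKr (xb b)) -/(yb b) -xy addNr.
by rewrite !mxE eqxx oner_eq0.
Qed.

Section BondEstimate.
Variables (R : realType) (d : nat) (a : bond d -> R) (u : zpt d -> R) (p : R).
Hypotheses (a_Omega : in_Omega a) (p_ge1 : 1 <= p).

Definition energy (e : bond d) : R := a e * `|grad u e| ^+ 2.

(* Summed over [b], this weight is at most [C(p,d)], since [b |-> x_b + y_b] is
   injective ([bond_midpoint_inj]). *)
Definition shift_weight (b e : bond d) : R :=
  (enorm R (xb b + yb b - (xb e + yb e)) + 1) `^ (1 - p).

Lemma shift_weight_ge0 b e : 0 <= shift_weight b e.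
Proof. exact: powR_ge0. Qed.

Lemma energy_ge0 e : 0 <= energy e.
Proof. by have /andP[ae_ge0 _] := a_Omega e; rewrite mulr_ge0 ?sqr_ge0. Qed.

Lemma sqr_normB_le_cost_energy x q y : nn_path x q y -> {in q, forall s, 0 < a s.1} ->
  `|u y - u x| ^+ 2 <= (\sum_(s <- q) (a s.1)^-1) * \sum_(s <- q) energy s.1.
Proof.
move=> hq a_gt0.
have := @weighted_cauchy_schwarz _ _ q (fun s => (a s.1)^-1) (fun s => `|grad u s.1|).
rewrite [X in _ <= _ * X](eq_bigr (fun s => energy s.1)) => [CS|s _]; last first.
  by rewrite /= invrK mulrC.
apply: le_trans (CS _); last by move=> s /a_gt0; rewrite invr_gt0.
by apply: lerXn2r; rewrite ?nnegrE ?sumr_ge0 //; exact: normB_le_nn_path.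
Qed.

Lemma bond_term_le b r eta : chem_dist a (xb b) (yb b) = r%:E -> 1 < eta ->
  exists2 es : seq (bond d), uniq es &
    `|grad u b| ^+ 2 * r `^ (- p) <= eta `^ p * \sum_(e <- es) shift_weight b e * energy e.
Proof.
move=> dist_r eta_gt1.
have r_ge1 : 1 <= r by rewrite -lee_fin -dist_r chem_dist_ge1 ?xb_neq_yb.
have r_gt0 : 0 < r := lt_le_trans ltr01 r_ge1.
have r_lt : r < eta * r by rewrite ltr_pMl.
have [q [hq uq cost_lt]] := exists_uniq_nn_path_cost_lt a_Omega dist_r r_lt.
have [a_gt0 costE] := path_cost_lt_pinfty a_Omega (lt_trans cost_lt (ltry _)).
set W := \sum_(s <- q) (a s.1)^-1 in costE.
have W_lt : W < eta * r by rewrite -lte_fin -costE.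
have size_le : (size q)%:R <= W by rewrite -lee_fin -costE path_cost_ge_size.
have E_ge0 : 0 <= \sum_(s <- q) energy s.1 by rewrite sumr_ge0 // => s _; exact: energy_ge0.
exists (map fst q) => //; rewrite big_map.
apply: (@le_trans _ _ (eta * r `^ (1 - p) * \sum_(s <- q) energy s.1)).
  have -> : r `^ (1 - p) = r * r `^ (- p).
    by rewrite powRD ?powRr1 ?(ltW r_gt0) ?(gt_eqF r_gt0) ?implybT.
  have grad_le := sqr_normB_le_cost_energy hq a_gt0.
  have rp_ge0 := powR_ge0 r (- p).
  apply: le_trans (ler_wpM2r rp_ge0 grad_le) _.
  by rewrite mulrA [X in _ <= X]mulrAC !ler_wpM2r // ltW.
rewrite !mulr_sumr !big_seq; apply: ler_sum => s sq.
rewrite mulrA ler_wpM2r ?energy_ge0 // mul_powR1B_le //.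
  by rewrite ltr_pwDr ?sqrtr_ge0.
have := l1norm_nn_path_bond_le R hq sq.
have := enorm_le_l1norm R (xb b + yb b - (xb s.1 + yb s.1)); lra.
Qed.

End BondEstimate.

Lemma esum_mulel_le (R : realType) (T : choiceType) (c : \bar R) (f : T -> \bar R) :
  (0 <= c)%E -> (forall x, 0 <= f x)%E ->
  (\esum_(x in [set: T]) (c * f x) <= c * \esum_(x in [set: T]) f x)%E.
Proof.
move=> c_ge0 f_ge0; apply: ge_ereal_sup => _ [X [finX _] <-] /=.
rewrite -ge0_mule_fsumr //; apply: lee_wpmul2l => //.
by apply: esum_ge; exists X.
Qed.

Lemma exchange_esum (R : realType) (T : choiceType) (F : T -> T -> \bar R) :
  (forall x y, 0 <= F x y)%E ->
  \esum_(x in [set: T]) \esum_(y in [set: T]) F x y =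
  \esum_(y in [set: T]) \esum_(x in [set: T]) F x y.
Proof.
move=> F_ge0.
rewrite (esum_esum (I := [set: T]) (J := fun=> [set: T]) (a := F)) //.
rewrite (esum_esum (I := [set: T]) (J := fun=> [set: T]) (a := fun y x => F x y)) //.
apply: (reindex_esum _ _ (fun k => (k.2, k.1))); split.
- by move=> [x y] _.
- by move=> [x1 y1] [x2 y2] _ _ [-> ->].
- by move=> [x y] _; exists (y, x).
Qed.

Lemma esum_comp_inj_le (R : realType) (T T' : choiceType) (e : T -> T') (h : T' -> \bar R) :
  injective e -> (forall z, 0 <= h z)%E ->
  (\esum_(x in [set: T]) h (e x) <= \esum_(z in [set: T']) h z)%E.
Proof.
move=> e_inj h_ge0; rewrite -(esum_image [set: T] e h); last by move=> x y _ _ /e_inj.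
rewrite esum_mkcond [X in (_ <= X)%E]esum_mkcond; apply: le_esum => z _.
by rewrite [X in (_ <= X)%E]ifT ?inE //; case: ifP.
Qed.

Lemma lee_of_forall_gt1_mule (R : realType) (x y : \bar R) : (0 <= x)%E ->
  (forall c : R, 1 < c -> (x <= c%:E * y)%E) -> (x <= y)%E.
Proof.
move=> x_ge0 le_cy; apply/lee_mul01Pr => // r /andP[r_gt0 r_lt1].
have /(lee_wpmul2l (_ : 0 <= r%:E)%E) : (x <= r^-1%:E * y)%E.
  by apply: le_cy; rewrite invf_gt1.
by rewrite muleA -EFinM mulfV ?gt_eqF // mul1e; apply; rewrite lee_fin ltW.
Qed.

(* A parity argument: x_b + y_b has exactly one odd coordinate, which recovers
   the direction of b, and then x_b itself. *)
Lemma bond_midpoint_inj (d : nat) : injective (fun b : bond d => xb b + yb b).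
Proof.
move=> [x i] [x' i']; rewrite /xb /yb /= => /matrixP mid.
have mid_j j :
    x ord0 j + (x ord0 j + (i == j)%:R) = x' ord0 j + (x' ord0 j + (i' == j)%:R).
  by have := mid ord0 j; rewrite !mxE.
have ii' : i = i'.
  have [//|ne] := eqVneq i i'.
  by move: (mid_j i); rewrite eqxx eq_sym (negPf ne) /=; lia.
subst i'; congr pair; apply/matrixP => k j.
by move: (mid k j); rewrite !mxE; case: (i == j) => /=; lia.
Qed.

Section Summation.
Variables (R : realType) (d : nat) (a : bond d -> R) (u : zpt d -> R) (p eta : R).
Hypotheses (a_Omega : in_Omega a) (p_ge1 : 1 <= p) (eta_gt1 : 1 < eta).

Let term (b : bond d) : R := `|grad u b| ^+ 2 * chem_dist_pow a p (xb b) (yb b).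

Lemma exists_bond_cover b : exists es : seq (bond d),
  uniq es /\ term b <= eta `^ p * \sum_(e <- es) shift_weight p b e * energy a u e.
Proof.
rewrite /term /chem_dist_pow; case dist_b: chem_dist => [r| |].
- by have [es] := bond_term_le u a_Omega p_ge1 dist_b eta_gt1; exists es.
- by exists [::]; rewrite big_nil !mulr0.
- by exists [::]; rewrite big_nil !mulr0.
Qed.

Let cover := projT1 (choice exists_bond_cover).
Let cover_spec := projT2 (choice exists_bond_cover).

Let cover_term (b e : bond d) : \bar R :=
  if e \in cover b then (eta `^ p * (shift_weight p b e * energy a u e))%:E else 0%E.

Let cover_term_ge0 b e : (0 <= cover_term b e)%E.
Proof.
rewrite /cover_term; case: ifP => // _.
by rewrite lee_fin mulr_ge0 ?powR_ge0 // mulr_ge0 ?shift_weight_ge0 ?energy_ge0.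
Qed.

Let term_le_esum_cover b : ((term b)%:E <= \esum_(e in [set: bond d]) cover_term b e)%E.
Proof.
have [cover_uniq term_le] := cover_spec b.
apply: (@le_trans _ _ (eta `^ p * \sum_(e <- cover b) shift_weight p b e * energy a u e)%:E).
  by rewrite lee_fin.
apply: esum_ge; exists [set` cover b]; first by split; [exact: finite_seq|].
rewrite -fsbig_seq // GRing.mulr_sumr -sumEFin (eq_big_seq (cover_term b)) // => e e_in.
by rewrite /cover_term e_in.
Qed.

Let cover_term_le b e : (cover_term b e <=
  (eta `^ p * energy a u e)%:E * ((enorm R (xb b + yb b - (xb e + yb e)) + 1) `^ (1 - p))%:E)%E.
Proof.
rewrite /cover_term; case: ifP => _.
  by rewrite -EFinM lee_fin /shift_weight [_ * energy a u e]mulrC mulrA.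
by rewrite mule_ge0 // lee_fin ?powR_ge0 // mulr_ge0 ?powR_ge0 ?energy_ge0.
Qed.

Let esum_cover_term_le e :
  (\esum_(b in [set: bond d]) cover_term b e <= (eta `^ p * energy a u e)%:E * @Cpd R d p)%E.
Proof.
apply: le_trans (le_esum (fun b _ => cover_term_le b e)) _.
apply: le_trans (esum_mulel_le _ _) _.
- by rewrite lee_fin mulr_ge0 ?powR_ge0 ?energy_ge0.
- by move=> b; rewrite lee_fin powR_ge0.
apply: lee_wpmul2l; first by rewrite lee_fin mulr_ge0 ?powR_ge0 ?energy_ge0.
apply: (esum_comp_inj_le (e := fun b => xb b + yb b - (xb e + yb e))
  (h := fun z => ((enorm R z + 1) `^ (1 - p))%:E)).
- by move=> b1 b2 /addIr /bond_midpoint_inj.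
- by move=> z; rewrite lee_fin powR_ge0.
Qed.

Lemma Cpd_ge0 : (0 <= @Cpd R d p)%E.
Proof. by apply: esum_ge0 => x _; rewrite lee_fin powR_ge0. Qed.

Lemma esum_term_le :
  (\esum_(b in [set: bond d]) ((`|grad u b| ^+ 2 * chem_dist_pow a p (xb b) (yb b))%:E)
   <= @Cpd R d p * ((eta `^ p)%:E * \esum_(b in [set: bond d]) ((a b * `|grad u b| ^+ 2)%:E)))%E.
Proof.
apply: le_trans (le_esum (fun b _ => term_le_esum_cover b)) _.
rewrite exchange_esum //; apply: le_trans (le_esum (fun e _ => esum_cover_term_le e)) _.
rewrite (eq_esum (b := fun e => @Cpd R d p * ((eta `^ p)%:E * (energy a u e)%:E))%E); last first.
  by move=> e _; rewrite muleC EFinM.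
apply: le_trans (esum_mulel_le Cpd_ge0 _) _ => [e|].
  by rewrite mule_ge0 ?lee_fin ?powR_ge0 ?energy_ge0.
apply: lee_wpmul2l; first exact: Cpd_ge0.
by apply: esum_mulel_le => [|e]; rewrite lee_fin ?powR_ge0 ?energy_ge0.
Qed.

End Summation.

Theorem lemma4 (R : realType) (d : nat) (p : R) (u : zpt d -> R) (a : bond d -> R) :
  (d%:R + 1 < p) ->
  in_Omega a ->
  (\esum_(b in [set: bond d]) ((`|grad u b| ^+ 2 * chem_dist_pow a p (xb b) (yb b))%:E)
     < +oo)%E ->
  (\esum_(b in [set: bond d]) ((a b * `|grad u b| ^+ 2)%:E) < +oo)%E ->
  (\esum_(b in [set: bond d]) ((`|grad u b| ^+ 2 * chem_dist_pow a p (xb b) (yb b))%:E)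
   <= @Cpd R d p * \esum_(b in [set: bond d]) ((a b * `|grad u b| ^+ 2)%:E))%E.
Proof.
move=> p_gt a_Omega _ _.
have p_ge1 : 1 <= p by have := ler0n R d; lra.
have pow_ge0 x y : 0 <= chem_dist_pow a p x y.
  by rewrite /chem_dist_pow; case: chem_dist => // r; exact: powR_ge0.
apply: lee_of_forall_gt1_mule => [|c c_gt1].
  by apply: esum_ge0 => b _; rewrite lee_fin mulr_ge0 ?sqr_ge0.
have c_ge0 : 0 <= c by rewrite ltW // (lt_trans ltr01).
have p_inv_gt0 : 0 < p^-1 by rewrite invr_gt0 (lt_le_trans ltr01).
have eta_gt1 : 1 < c `^ p^-1.
  by have := gt0_ltr_powR p_inv_gt0 _ _ c_gt1; rewrite powR1; apply; rewrite nnegrE.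
have <- : (c `^ p^-1) `^ p = c.
  by rewrite -powRrM mulVf ?gt_eqF ?(lt_le_trans ltr01) // powRr1.
by rewrite muleCA; exact: esum_term_le.
Qed.
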